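(* Let $H_1$ and $H_2$ be two bipartite graphs with $\mathrm{ex}(n, H_1) = O(n^{1 + \alpha})$ and $\mathrm{ex}(n, H_2) = O(n^{1 + \beta})$. Fix $e_1 \in E(H_1)$ and $e_2 \in E(H_2)$. Then the family $\mathcal{H}$ of graphs formed by identifying $e_1$ and $e_2$ satisfies $$\mathrm{ex}(n, \mathcal{H}) = O(n^{1 + \max\{\alpha, \beta\}}).$$
   Context: For a family $\mathcal{H}$ of graphs, $\mathrm{ex}(n,\mathcal{H})$ is the maximum number of edges in an $n$-vertex graph containing no copy of any member of $\mathcal{H}$; $\mathrm{ex}(n,H)=\mathrm{ex}(n,\{H\})$. Identifying an edge $e_1=ab$ of $H_1$ with an edge $e_2=cd$ of $H_2$ means: take the vertex-disjoint union of $H_1$ and $H_2$ and either identify $a$ with $c$ and $b$ with $d$, or identify $a$ with $d$ and $b$ with $c$ (the two resulting edges become one edge). The family $\mathcal{H}$ consists of the (at most two) graphs obtained in these two ways. *)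

From Stdlib Require Import Reals.
From mathcomp Require Import all_boot.
Set Implicit Arguments. Unset Strict Implicit. Unset Printing Implicit Defensive.

Record graph := Graph { gV : finType; gadj : rel gV }.

Definition simple (H : graph) : Prop :=
  symmetric (@gadj H) /\ irreflexive (@gadj H).

Definition bipartite (H : graph) : Prop :=
  exists c : gV H -> bool, forall u v, @gadj H u v -> c u != c v.

Definition host n := {ffun 'I_n * 'I_n -> bool}.

Definition host_simple n (g : host n) : bool :=
  [forall u, forall v, g (u, v) == g (v, u)] && [forall u, ~~ g (u, u)].

Definition nedges n (g : host n) : nat :=
  #|[set p : 'I_n * 'I_n | g p && (p.1 < p.2)%N]|.

Definition contains n (g : host n) (H : graph) : bool :=
  [exists f : {ffun gV H -> 'I_n},
     injectiveb f && [forall u, forall v, @gadj H u v ==> g (f u, f v)]].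

Definition free n (g : host n) (F : seq graph) : bool :=
  all (fun H => ~~ contains g H) F.

Definition ex (n : nat) (F : seq graph) : nat :=
  \max_(g : host n | host_simple g && free g F) nedges g.

Definition bigO_pow (f : nat -> nat) (e : R) : Prop :=
  exists (C : R) (N : nat), forall n : nat, (N <= n)%nat ->
    Rle (INR (f n)) (Rmult C (Rpower (INR n) (Rplus 1 e))).

Definition sum_adj (H1 H2 : graph) : rel (gV H1 + gV H2) :=
  fun x y => match x, y with
             | inl u, inl v => @gadj H1 u v
             | inr u, inr v => @gadj H2 u v
             | _, _ => false end.

Definition glue_proj (H1 H2 : graph) (a b : gV H1) (c d : gV H2)
  (x : gV H1 + gV H2) : gV H1 + gV H2 :=
  match x with
  | inr w => if w == c then inl a else if w == d then inl b else x
  | inl _ => x end.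

Definition glue_vert (H1 H2 : graph) (a b : gV H1) (c d : gV H2) : finType :=
  {x : gV H1 + gV H2 | glue_proj a b c d x == x}.

Definition glue_adj (H1 H2 : graph) (a b : gV H1) (c d : gV H2)
  : rel (glue_vert a b c d) :=
  fun x y => [exists u, exists v,
    [&& glue_proj a b c d u == val x, glue_proj a b c d v == val y & sum_adj u v]].

Definition glue (H1 H2 : graph) (a b : gV H1) (c d : gV H2) : graph :=
  @Graph (@glue_vert H1 H2 a b c d) (@glue_adj H1 H2 a b c d).

Definition ident_family (H1 H2 : graph) (a b : gV H1) (c d : gV H2) : seq graph :=
  [:: glue a b c d; glue a b d c].

From Stdlib Require Import Reals Lra.
From mathcomp Require Import all_boot zify.
Set Implicit Arguments. Unset Strict Implicit. Unset Printing Implicit Defensive.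

(* Let g be a host graph with no member of the family and h = |V(H1)|.  Call an
   edge uv of g blocked if some set S of at most h vertices, missing u and v,
   meets every copy of H2 in g that maps the edge cd onto uv.  The unblocked
   edges form an H1-free graph: a copy of H1 on them can be completed, through
   its edge ab, by a copy of H2 avoiding the other vertices of the copy, into a
   member of the family.  For the blocked edges, average over all vertex sets T:
   the blocked edges inside T having a blocker disjoint from T form an H2-free
   graph, and each blocked edge is counted by at least 2^(n-h-2) of the 2^n sets
   T.  Hence ex(n, family) <= ex(n, H1) + 2^(h+2) ex(n, H2). *)

Lemma card_set_indicator (T : finType) (P : pred T) :
  #|[set x | P x]| = \sum_x (P x : nat).
Proof. by rewrite -sum1_card big_mkcond; apply: eq_bigr => x _; rewrite inE; case: (P x). Qed.

Lemma card_set_ord n : #|{set 'I_n}| = 2 ^ n.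
Proof.
have ->: 2 ^ n = 2 ^ #|[set: 'I_n]| by rewrite cardsT card_ord.
by rewrite -card_powerset; apply: eq_card => A; rewrite inE powersetE subsetT.
Qed.

Lemma card_supersets_disjoint (T : finType) (A S : {set T}) :
  [disjoint A & S] ->
  2 ^ (#|T| - (#|A| + #|S|)) <= #|[set X : {set T} | (A \subset X) && [disjoint S & X]]|.
Proof.
move=> dAS; set C := ~: (A :|: S).
have leC : #|T| - (#|A| + #|S|) <= #|C|.
  by have := cardsC (A :|: S); have [+ _] := leq_card_setU A S; rewrite /C; lia.
apply: leq_trans (leq_pexp2l (isT : 0 < 2) leC) _.
have addA_inj : {in powerset C &, injective (fun U => U :|: A)}.
  move=> U1 U2; rewrite !inE => sU1 sU2 eqU.
  suff UE (U : {set T}) : U \subset C -> U = (U :|: A) :\: A.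
    by rewrite (UE _ sU1) (UE _ sU2) eqU.
  move=> /subsetP sUC; apply/setP => x; rewrite !inE.
  case: (boolP (x \in U)) => [/sUC|] /=; last by case: (x \in A).
  by rewrite !inE => /norP[->].
rewrite -card_powerset -(card_in_imset addA_inj); apply: subset_leq_card.
apply/subsetP => X /imsetP[U]; rewrite powersetE => /subsetP sUC ->; rewrite inE subsetUr /=.
rewrite -setI_eq0; apply/eqP/setP => x; rewrite !inE.
case: (boolP (x \in S)) => //= xS; apply/negbTE/norP; split; apply/negP.
  by move/sUC; rewrite !inE xS orbT.
by move=> xA; rewrite (disjointFr dAS xA) in xS.
Qed.

Lemma injective_extension_avoiding (V W : finType) (f : V -> W)
    (N : {set V}) (B : {set W}) :
  {in N &, injective f} -> {in N, forall u, f u \notin B} -> #|V| + #|B| <= #|W| ->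
  exists2 f' : V -> W, injective f' & {in N, f' =1 f} /\ forall u, f' u \notin B.
Proof.
move=> f_inj fB cardVB; set C := ~: (B :|: f @: N).
have leC : #|~: N| <= #|C|.
  have := cardsC N; have := cardsC (B :|: f @: N); have [+ _] := leq_card_setU B (f @: N).
  by have := leq_imset_card f N; rewrite /C; lia.
pose i u := index u (enum (~: N)).
have i_lt u : u \notin N -> i u < size (enum C).
  by move=> uN; rewrite -cardE (leq_trans _ leC) // cardE index_mem mem_enum inE.
pose fresh u := nth (f u) (enum C) (i u).
have freshC u : u \notin N -> fresh u \in C by move=> /i_lt; rewrite -mem_enum; apply: mem_nth.
have fresh_new u v : u \notin N -> v \in N -> fresh u != f v.
  move=> /freshC; rewrite !inE => /norP[_ fuN] vN.
  by apply: contraNneq fuN => ->; apply: imset_f.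
pose f' u := if u \in N then f u else fresh u.
exists f'; last split.
- move=> u v; rewrite /f'.
  case: (boolP (u \in N)) => uN; case: (boolP (v \in N)) => vN.
  + exact: f_inj.
  + by move=> /esym/eqP; rewrite (negbTE (fresh_new _ _ vN uN)).
  + by move=> /eqP; rewrite (negbTE (fresh_new _ _ uN vN)).
  + rewrite /fresh (set_nth_default (f u) (f v) (i_lt _ vN)).
    move/eqP; rewrite nth_uniq ?enum_uniq ?i_lt // => /eqP/(congr1 (nth u (enum (~: N)))).
    by rewrite !nth_index // mem_enum inE.
- by move=> u uN; rewrite /f' uN.
- move=> u; rewrite /f'; case: ifPn => uN; first exact: fB.
  by have := freshC u uN; rewrite !inE => /norP[].
Qed.

Lemma ex_leq n F B :
  (forall g : host n, host_simple g -> free g F -> nedges g <= B) -> ex n F <= B.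
Proof. by move=> gB; apply/bigmax_leqP => g /andP[]; apply: gB. Qed.

Lemma nedges_leq_ex n F (g : host n) : host_simple g -> free g F -> nedges g <= ex n F.
Proof.
move=> g_simple g_free.
by apply: (leq_bigmax_cond (P := fun g => host_simple g && free g F)); apply/andP.
Qed.

Definition subhost n (g : host n) (P : rel 'I_n) : host n := [ffun p => g p && P p.1 p.2].

Lemma subhost_simple n (g : host n) (P : rel 'I_n) :
  host_simple g -> symmetric P -> host_simple (subhost g P).
Proof.
move=> /andP[/forallP g_sym /forallP g_irr] P_sym; apply/andP; split.
  apply/forallP => u; apply/forallP => v; rewrite !ffunE /= P_sym.
  by have /forallP/(_ v)/eqP-> := g_sym u.
by apply/forallP => u; rewrite ffunE negb_and g_irr.
Qed.

Lemma nedges_subhost_split n (g : host n) (P : rel 'I_n) :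
  nedges g <= nedges (subhost g P) + nedges (subhost g (fun u v => ~~ P u v)).
Proof.
apply: leq_trans (leq_card_setU _ _); apply: subset_leq_card; apply/subsetP => p.
by rewrite !inE !ffunE => /andP[-> ->]; case: (P _ _).
Qed.

Definition is_copy n (g : host n) (H : graph) (f : {ffun gV H -> 'I_n}) : bool :=
  injectiveb f && [forall u, forall v, @gadj H u v ==> g (f u, f v)].

Lemma is_copyP n (g : host n) (H : graph) (f : {ffun gV H -> 'I_n}) :
  reflect (injective f /\ forall u v, @gadj H u v -> g (f u, f v)) (is_copy g f).
Proof.
apply: (iffP andP) => -[/injectiveP f_inj f_adj]; split=> //.
- by move=> u v; move/forallP: f_adj => /(_ u)/forallP/(_ v)/implyP.
- by apply/forallP => u; apply/forallP => v; apply/implyP; apply: f_adj.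
Qed.

Lemma is_copy_subhost n (g : host n) (P : rel 'I_n) (H : graph)
    (f : {ffun gV H -> 'I_n}) :
  is_copy (subhost g P) f -> is_copy g f.
Proof.
move=> /is_copyP[f_inj f_adj]; apply/is_copyP; split=> // u v /f_adj.
by rewrite ffunE => /andP[].
Qed.

Section Glue.

Variables (n : nat) (g : host n) (H1 H2 : graph) (a b : gV H1) (c d : gV H2).
Variables (f1 : {ffun gV H1 -> 'I_n}) (f2 : {ffun gV H2 -> 'I_n}).

Definition glue_map (z : gV H1 + gV H2) : 'I_n :=
  match z with inl u => f1 u | inr w => f2 w end.

Hypotheses (f1_copy : is_copy g f1) (f2_copy : is_copy g f2).
Hypotheses (f12a : f1 a = f2 c) (f12b : f1 b = f2 d).
Hypothesis f12_disj : forall u w, u != a -> u != b -> f1 u != f2 w.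

Lemma glue_map_proj z : glue_map (glue_proj a b c d z) = glue_map z.
Proof. by case: z => //= w; do 2?case: eqP => [->|_] //. Qed.

Lemma f1_neq_f2 u w : w != c -> w != d -> f1 u != f2 w.
Proof.
move=> wc wd; have [f2_inj _] := is_copyP _ _ f2_copy.
case: (eqVneq u a) => [->|ua]; first by rewrite f12a (inj_eq f2_inj) eq_sym.
case: (eqVneq u b) => [->|ub]; first by rewrite f12b (inj_eq f2_inj) eq_sym.
exact: f12_disj.
Qed.

Lemma glue_map_inj : injective (fun x : glue_vert a b c d => glue_map (val x)).
Proof.
have [f1_inj _] := is_copyP _ _ f1_copy; have [f2_inj _] := is_copyP _ _ f2_copy.
move=> [zx px] [zy py] /= e; apply: val_inj => /=.
case: zx px e => [u|w] /= /eqP px; case: zy py => [u'|w'] /= /eqP py /= e.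
- by rewrite (f1_inj _ _ e).
- move: py; case: eqP => // /eqP w'c; case: eqP => // /eqP w'd _.
  by move/eqP: e; rewrite (negbTE (f1_neq_f2 u w'c w'd)).
- move: px; case: eqP => // /eqP wc; case: eqP => // /eqP wd _.
  by move/eqP: e; rewrite eq_sym (negbTE (f1_neq_f2 u' wc wd)).
- by rewrite (f2_inj _ _ e).
Qed.

Lemma glue_contains : contains g (glue a b c d).
Proof.
have [_ f1_adj] := is_copyP _ _ f1_copy; have [_ f2_adj] := is_copyP _ _ f2_copy.
apply/existsP; exists [ffun x => glue_map (val x)]; apply/is_copyP; split.
  by move=> x y; rewrite !ffunE; apply: glue_map_inj.
move=> x y /existsP[u /existsP[v /and3P[/eqP ux /eqP vy uv]]].
rewrite !ffunE -ux -vy !glue_map_proj.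
by case: u v uv {ux vy} => [u|u] [v|v] //= uv; [apply: f1_adj | apply: f2_adj].
Qed.

End Glue.

Section Blocking.

Variables (n : nat) (g : host n) (H : graph) (c d : gV H) (h : nat).

Definition copy_on_avoiding (u v : 'I_n) (S : {set 'I_n}) : bool :=
  [exists f : {ffun gV H -> 'I_n}, [&& is_copy g f,
     ((f c == u) && (f d == v)) || ((f c == v) && (f d == u)) & [forall w, f w \notin S]]].

Definition blocks (u v : 'I_n) (S : {set 'I_n}) :=
  [&& #|S| <= h, u \notin S, v \notin S & ~~ copy_on_avoiding u v S].

Definition blocked (u v : 'I_n) := [exists S, blocks u v S].

Definition blocked_in (T : {set 'I_n}) (u v : 'I_n) :=
  [&& u \in T, v \in T & [exists S, blocks u v S && [disjoint S & T]]].

Lemma blocksC u v S : blocks u v S = blocks v u S.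
Proof.
rewrite /blocks /copy_on_avoiding (andbCA (u \notin S)); do 3!congr andb.
by congr negb; apply: eq_existsb => f; rewrite (orbC (_ && _)).
Qed.

Lemma blocked_sym : symmetric blocked.
Proof. by move=> u v; apply: eq_existsb => S; rewrite blocksC. Qed.

Lemma blocked_in_sym T : symmetric (blocked_in T).
Proof.
move=> u v; rewrite /blocked_in andbCA; do 2!congr andb.
by apply: eq_existsb => S; rewrite blocksC.
Qed.

(* Isolated vertices of a copy may land in the blocking set; they are moved away from it. *)
Lemma blocked_in_free T :
  @gadj H c d -> #|gV H| + h <= n -> ~~ contains (subhost g (blocked_in T)) H.
Proof.
move=> cd le_n; apply/negP => /existsP[f /is_copyP[f_inj f_adj]].
have /f_adj := cd; rewrite ffunE /= => /and4P[_ _ _ /existsP[S /andP[blockS dST]]].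
case/and4P: blockS => leS _ _ /negP; apply.
pose N := [set w | [exists z, @gadj H w z || @gadj H z w]].
have adjN x y : @gadj H x y -> (x \in N) && (y \in N).
  by move=> xy; rewrite !inE; apply/andP; split; apply/existsP; [exists y | exists x];
    rewrite xy ?orbT.
have fN_T w : w \in N -> f w \in T.
  by rewrite inE => /existsP[z /orP[] /f_adj]; rewrite ffunE => /and4P[].
have fN_S w : w \in N -> f w \notin S.
  by move=> /fN_T wT; apply/negP => /(disjointFr dST); rewrite wT.
have [|f' f'_inj [f'N f'_S]] :=
  injective_extension_avoiding (fun x y _ _ => f_inj x y) fN_S.
  by rewrite card_ord; apply: leq_trans le_n; rewrite leq_add2l.
apply/existsP; exists [ffun w => f' w]; apply/and3P; split.
- apply/is_copyP; split=> [x y|x y xy]; rewrite !ffunE; first exact: f'_inj.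
  have /andP[xN yN] := adjN _ _ xy.
  by have := f_adj _ _ xy; rewrite ffunE !f'N // => /andP[].
- by have /andP[cN dN] := adjN _ _ cd; rewrite !ffunE !f'N // !eqxx.
- by apply/forallP => w; rewrite ffunE.
Qed.

Lemma nedges_blocked_average :
  2 ^ (n - (h + 2)) * nedges (subhost g blocked)
    <= \sum_(T : {set 'I_n}) nedges (subhost g (blocked_in T)).
Proof.
rewrite /nedges card_set_indicator (eq_bigr (fun T =>
  \sum_p (subhost g (blocked_in T) p && (p.1 < p.2) : nat))) => [|T _]; last first.
  exact: card_set_indicator.
rewrite exchange_big big_distrr /=; apply: leq_sum => -[u v] _; rewrite ffunE /=.
case: (boolP (g (u, v) && blocked u v && (u < v))) => [|_]; last by rewrite muln0.
case/andP=> /andP[guv /existsP[S blockS]] uv; rewrite muln1.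
have /and4P[leS uS vS _] := blockS.
have dUV : [disjoint [set u; v] & S].
  by rewrite disjoints_subset subUset !sub1set !inE uS vS.
have le2 : #|[set u; v]| <= 2 by rewrite cards2; case: (u != v).
have := card_supersets_disjoint dUV; rewrite card_ord => supersets.
apply: leq_trans (leq_trans _ supersets) _.
  by rewrite leq_pexp2l // leq_sub2l // addnC leq_add.
rewrite card_set_indicator; apply: leq_sum => T _; rewrite ffunE /= guv uv andbT.
case/boolP: (_ && _) => // /andP[/subsetP uvT dST].
rewrite /blocked_in !uvT ?set21 ?set22 //=.
by rewrite lt0b; apply/existsP; exists S; rewrite blockS dST.
Qed.

Lemma nedges_blocked_leq :
  host_simple g -> @gadj H c d -> #|gV H| + h <= n ->
  2 ^ (n - (h + 2)) * nedges (subhost g blocked) <= 2 ^ n * ex n [:: H].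
Proof.
move=> g_simple cd le_n; apply: leq_trans nedges_blocked_average _.
rewrite -card_set_ord mulnC -iter_addn_0 -big_const; apply: leq_sum => T _.
apply: nedges_leq_ex; first exact: subhost_simple (blocked_in_sym T).
by rewrite /free /= andbT blocked_in_free.
Qed.

End Blocking.

Lemma unblocked_free n (g : host n) (H1 H2 : graph) (a b : gV H1) (c d : gV H2) :
  @gadj H1 a b -> free g (ident_family a b c d) ->
  ~~ contains (subhost g (fun u v => ~~ blocked g c d #|gV H1| u v)) H1.
Proof.
move=> ab; rewrite /free /= andbT => /andP[/negP no_glue /negP no_glue'].
apply/negP => /existsP[f1 f1_copy]; have /is_copyP[f1_inj f1_adj] := f1_copy.
pose S := f1 @: [set u | (u != a) && (u != b)].
have f1S u : u != a -> u != b -> f1 u \in S by move=> ua ub; rewrite imset_f // inE ua ub.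
have aS : f1 a \notin S.
  by apply/imsetP => -[u]; rewrite inE => /andP[ua _] /f1_inj au; rewrite au eqxx in ua.
have bS : f1 b \notin S.
  by apply/imsetP => -[u]; rewrite inE => /andP[_ ub] /f1_inj bu; rewrite bu eqxx in ub.
have /f1_adj := ab; rewrite ffunE /= => /andP[_ /existsPn/(_ S)].
rewrite /blocks (leq_trans (leq_imset_card _ _) (max_card _)) aS bS negbK /=.
case/existsP=> f2 /and3P[f2_copy f2_ends /forallP f2_S].
have disj u w : u != a -> u != b -> f1 u != f2 w.
  by move=> ua ub; apply: contraNneq (f2_S w) => <-; apply: f1S.
have g_f1 := is_copy_subhost f1_copy.
by case/orP: f2_ends => /andP[/eqP f2c /eqP f2d];
  [apply: no_glue | apply: no_glue']; apply: glue_contains g_f1 f2_copy _ _ disj.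
Qed.

Lemma ex_ident_family_leq n (H1 H2 : graph) (a b : gV H1) (c d : gV H2) :
  @gadj H1 a b -> @gadj H2 c d -> #|gV H1| + #|gV H2| + 2 <= n ->
  ex n (ident_family a b c d) <= ex n [:: H1] + 2 ^ (#|gV H1| + 2) * ex n [:: H2].
Proof.
move=> ab cd le_n; apply: ex_leq => g g_simple g_free; set h := #|gV H1|.
apply: leq_trans (nedges_subhost_split g (blocked g c d h)) _; rewrite addnC.
apply: leq_add.
  apply: nedges_leq_ex; last by rewrite /free /= andbT (unblocked_free ab g_free).
  by apply: subhost_simple => // u v; rewrite blocked_sym.
rewrite -(@leq_pmul2l (2 ^ (n - (h + 2)))) ?expn_gt0 // mulnA -expnD subnK; last by lia.
by apply: nedges_blocked_leq; rewrite // addnC; lia.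
Qed.

Section BigOPow.

Implicit Types (f g : nat -> nat) (e : R).

Lemma bigO_pow_eventually_le f g e :
  (exists M, forall n, M <= n -> f n <= g n) -> bigO_pow g e -> bigO_pow f e.
Proof.
move=> [M fg] [C [N hg]]; exists C, (M + N) => n hn.
apply: Rle_trans (hg n ltac:(lia)); apply: le_INR; apply/leP; apply: fg; lia.
Qed.

Lemma bigO_pow_weaken f e e' : Rle e e' -> bigO_pow f e -> bigO_pow f e'.
Proof.
move=> ee' [C [N hf]]; exists (Rabs C), (N + 1) => n hn.
have n_ge1 : Rle 1 (INR n) by apply: (le_INR 1); apply/leP; lia.
have pow_le : Rle (Rpower (INR n) (1 + e)) (Rpower (INR n) (1 + e')).
  by apply: Rle_Rpower => //; lra.
have pow_pos : Rlt 0 (Rpower (INR n) (1 + e)) by apply: exp_pos.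
apply: Rle_trans (hf n ltac:(lia)) _.
apply: Rle_trans (Rmult_le_compat_r _ _ _ (Rlt_le _ _ pow_pos) (Rle_abs C)) _.
exact: Rmult_le_compat_l (Rabs_pos C) pow_le.
Qed.

Lemma bigO_pow_add f g e :
  bigO_pow f e -> bigO_pow g e -> bigO_pow (fun n => f n + g n) e.
Proof.
move=> [C1 [N1 hf]] [C2 [N2 hg]]; exists (Rplus C1 C2), (N1 + N2) => n hn.
have := hf n ltac:(lia); have := hg n ltac:(lia).
rewrite plus_INR Rmult_plus_distr_r; lra.
Qed.

Lemma bigO_pow_scale K f e : bigO_pow f e -> bigO_pow (fun n => K * f n) e.
Proof.
move=> [C [N hf]]; exists (Rmult (INR K) C), N => n hn.
rewrite mult_INR Rmult_assoc; exact: Rmult_le_compat_l (pos_INR K) (hf n hn).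
Qed.

End BigOPow.

Theorem theorem1p2 (H1 H2 : graph) (alpha beta : R) :
  simple H1 -> simple H2 -> bipartite H1 -> bipartite H2 ->
  bigO_pow (fun n => ex n [:: H1]) alpha ->
  bigO_pow (fun n => ex n [:: H2]) beta ->
  forall (a b : gV H1) (c d : gV H2), @gadj H1 a b -> @gadj H2 c d ->
  bigO_pow (fun n => ex n (ident_family a b c d)) (Rmax alpha beta).
Proof.
move=> _ _ _ _ ex_H1 ex_H2 a b c d ab cd.
apply: (bigO_pow_eventually_le
  (g := fun n => ex n [:: H1] + 2 ^ (#|gV H1| + 2) * ex n [:: H2])).
  by exists (#|gV H1| + #|gV H2| + 2) => n; apply: ex_ident_family_leq.
apply: bigO_pow_add; first exact: bigO_pow_weaken (Rmax_l alpha beta) ex_H1.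
exact/bigO_pow_scale/(bigO_pow_weaken (Rmax_r alpha beta) ex_H2).
Qed.
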